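(* Let $m,n$ be nonzero integers with $|m|<|n|$, let $h=\gcd(m,n)$, $p=|m|/h$, $q=|n|/h$. Let $u_1,u_2$ be vertices of type $a$ of $\Lambda_{m,n}$, with corresponding vertices $\bar u_1,\bar u_2$ of $T$ and corresponding $a$-lines $\ell_1,\ell_2$ of $\Upsilon_{m,n}$. Assume that some $t$-line intersects both $\ell_1$ and $\ell_2$, and let $\ell^{12}_2\subseteq\ell_2$ be the set of all points $\ell_2\cap\ell$ where $\ell$ ranges over the $t$-lines intersecting both $\ell_1$ and $\ell_2$. Then $\ell^{12}_2$ is a set of equally spaced vertices of $\ell_2$, with gap (number of $a$-edges along $\ell_2$ between consecutive elements) equal to $hq^{d_T(\bar u_1,\bar u_2)}$ if $u_2<u_1$, and equal to $hp^{d_T(\bar u_1,\bar u_2)}$ if $u_1<u_2$.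
   Context: $\mathrm{BS}(m,n)=\langle a,t\mid ta^mt^{-1}=a^n\rangle$; $\Upsilon_{m,n}$ is its Cayley graph for $\{a,t\}$ (edges $g\to gs$ oriented and labeled by $s$); $a$-lines and $t$-lines are the subgraphs spanned by left cosets of $\langle a\rangle$ and $\langle t\rangle$. $\Lambda_{m,n}$ has one vertex per $a$-line or $t$-line (of type $a$ or $t$ respectively), adjacent when the lines intersect. $T$ is the Bass–Serre tree: its vertices are the $a$-lines (identified with type-$a$ vertices of $\Lambda_{m,n}$), with one edge, oriented from $\ell$ to $\ell'$, for each pair of $a$-lines $(\ell,\ell')$ such that $gt\in\ell'$ for some $g\in\ell$. Partial order on vertices of $T$ (hence on type-$a$ vertices): $v_1\le v_2$ if every edge on the geodesic from $v_1$ to $v_2$ is oriented from $v_1$ toward $v_2$; $u<u'$ means $u\le u'$ and $u\ne u'$. $d_T$ is the combinatorial distance in $T$. *)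

(* BS(m,n) is modelled by its presentation: words in the letters
   a, a^-1, t, t^-1, modulo the congruence generated by free cancellation and
   the relator t a^m t^-1 a^-n. *)
From Stdlib Require Import ZArith List Relations.
Import ListNotations.
Open Scope Z_scope.

Inductive letter := LA | LAi | LT | LTi.

Definition word := list letter.

Definition linv (x : letter) : letter :=
  match x with LA => LAi | LAi => LA | LT => LTi | LTi => LT end.

Definition apow (k : Z) : word :=
  if (0 <=? k) then repeat LA (Z.to_nat k) else repeat LAi (Z.to_nat (- k)).
Definition tpow (k : Z) : word :=
  if (0 <=? k) then repeat LT (Z.to_nat k) else repeat LTi (Z.to_nat (- k)).

Definition relator (m n : Z) : word := [LT] ++ apow m ++ [LTi] ++ apow (- n).

Inductive bs_step (m n : Z) : word -> word -> Prop :=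
| step_cancel u v x : bs_step m n (u ++ [x; linv x] ++ v) (u ++ v)
| step_rel u v : bs_step m n (u ++ relator m n ++ v) (u ++ v).

Definition bs_eq (m n : Z) : relation word := clos_refl_sym_trans word (bs_step m n).

Definition same_aline (m n : Z) (g g' : word) : Prop :=
  exists k : Z, bs_eq m n (g ++ apow k) g'.

Definition same_tline (m n : Z) (g g' : word) : Prop :=
  exists k : Z, bs_eq m n (g ++ tpow k) g'.

(* Bass-Serre tree T: vertices are a-lines, represented by any of their points.
   Oriented edge l -> l' iff g t ∈ l' for some g ∈ l. *)
Definition Tedge (m n : Z) (l l' : word) : Prop :=
  exists g, same_aline m n l g /\ same_aline m n l' (g ++ [LT]).

Definition Tadj (m n : Z) (l l' : word) : Prop := Tedge m n l l' \/ Tedge m n l' l.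

Inductive walk (m n : Z) (R : word -> word -> Prop) : word -> word -> nat -> Prop :=
| walk0 x y : same_aline m n x y -> walk m n R x y 0
| walkS x y z k : R x y -> walk m n R y z k -> walk m n R x z (S k).

Definition is_dT (m n : Z) (l l' : word) (d : nat) : Prop :=
  walk m n (Tadj m n) l l' d /\ (forall k, walk m n (Tadj m n) l l' k -> (d <= k)%nat).

Definition Tle (m n : Z) (v1 v2 : word) : Prop :=
  exists d, is_dT m n v1 v2 d /\ walk m n (Tedge m n) v1 v2 d.

Definition Tlt (m n : Z) (v1 v2 : word) : Prop :=
  Tle m n v1 v2 /\ ~ same_aline m n v1 v2.

Definition ell12 (m n : Z) (g1 g2 x : word) : Prop :=
  same_aline m n g2 x /\ exists y, same_aline m n g1 y /\ same_tline m n x y.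

Definition equally_spaced (m n : Z) (S : word -> Prop) (gap : Z) : Prop :=
  exists x0, S x0 /\ forall x, S x <-> exists k : Z, bs_eq m n (x0 ++ apow (gap * k)) x.

From Stdlib Require Import ZArith List Relations Morphisms Lia Znumtheory Bool.
Import ListNotations.
Open Scope Z_scope.

(* The t-line through a point of ℓ2 reaches ℓ1 after t^k, where k is the difference of
   the t-exponent sums of ℓ1 and ℓ2; the tree hypothesis forces k = d or k = -d. For a
   fixed x0 in ℓ12, the point x0 a^r lies in ℓ12 iff a^r t^k = t^k a^c for some c.
   Britton's lemma, realised by the action of BS(m,n) on normal forms, shows that
   t^d a^e t^-d = a^f iff e can be multiplied d times by n/m while staying in mZ; for
   m = h m', n = h n' with m', n' coprime this means e = h m'^d v and f = h n'^d v.
   Hence the admissible r are the multiples of h n'^d if k = d, of h m'^d if k = -d. *)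

Add Parametric Relation m n : word (bs_eq m n)
  reflexivity proved by (rst_refl word (bs_step m n))
  symmetry proved by (rst_sym word (bs_step m n))
  transitivity proved by (rst_trans word (bs_step m n)) as bs_eq_rel.

Lemma bs_step_app m n w1 w2 u v :
  bs_step m n u v -> bs_step m n (w1 ++ u ++ w2) (w1 ++ v ++ w2).
Proof.
  destruct 1 as [u v x | u v]; rewrite <- !app_assoc, !(app_assoc w1 u); constructor.
Qed.

Lemma bs_eq_app_lr m n w1 w2 u v :
  bs_eq m n u v -> bs_eq m n (w1 ++ u ++ w2) (w1 ++ v ++ w2).
Proof.
  induction 1 as [u v Huv | | |]; [apply rst_step, bs_step_app; exact Huv | reflexivity
  | symmetry; assumption | etransitivity; eassumption].
Qed.

Add Parametric Morphism m n : (@app letter) with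
  signature bs_eq m n ==> bs_eq m n ==> bs_eq m n as app_bs_eq.
Proof.
  intros u u' Hu v v' Hv. transitivity (u' ++ v).
  - exact (bs_eq_app_lr m n [] v u u' Hu).
  - pose proof (bs_eq_app_lr m n u' [] v v' Hv) as H. rewrite !app_nil_r in H. exact H.
Qed.

Add Parametric Morphism m n x : (@cons letter x) with
  signature bs_eq m n ==> bs_eq m n as cons_bs_eq.
Proof. intros u v H. exact (app_bs_eq m n [x] [x] (reflexivity _) u v H). Qed.

Lemma linv_involutive x : linv (linv x) = x.
Proof. destruct x; reflexivity. Qed.

Lemma bs_eq_cancel m n x : bs_eq m n [x; linv x] [].
Proof. exact (rst_step _ _ _ _ (step_cancel m n [] [] x)). Qed.

Lemma bs_eq_cancel_linv m n x : bs_eq m n [linv x; x] [].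
Proof. rewrite <- (linv_involutive x) at 2. apply bs_eq_cancel. Qed.

Definition winv (w : word) : word := rev (map linv w).

Lemma winv_app_l m n w : bs_eq m n (winv w ++ w) [].
Proof.
  induction w as [|x w IH]; [reflexivity|].
  unfold winv in *; cbn [map rev]. rewrite <- app_assoc.
  change ([linv x] ++ x :: w) with ([linv x; x] ++ w). rewrite bs_eq_cancel_linv. exact IH.
Qed.

Lemma bs_eq_app_cancel_l m n w u v : bs_eq m n (w ++ u) (w ++ v) -> bs_eq m n u v.
Proof.
  intros H.
  rewrite <- (app_nil_l u), <- (app_nil_l v), <- (winv_app_l m n w), <- !app_assoc, H.
  reflexivity.
Qed.

Definition lpow (x y : letter) (k : Z) : word :=
  if 0 <=? k then repeat x (Z.to_nat k) else repeat y (Z.to_nat (- k)).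

Section LetterPowers.
Variables (m n : Z) (x y : letter).
Hypothesis Hxy : linv x = y.

Lemma lpow_succ k : bs_eq m n (lpow x y k ++ [x]) (lpow x y (k + 1)).
Proof.
  unfold lpow. destruct (Z.leb_spec 0 k), (Z.leb_spec 0 (k + 1)); try lia.
  - rewrite Z2Nat.inj_add, repeat_app by lia. reflexivity.
  - replace (Z.to_nat (k + 1)) with 0%nat by lia.
    replace (Z.to_nat (- k)) with 1%nat by lia. simpl. rewrite <- Hxy. apply bs_eq_cancel_linv.
  - replace (Z.to_nat (- k)) with (S (Z.to_nat (- (k + 1)))) by lia.
    cbn [repeat]. rewrite repeat_cons, <- app_assoc; cbn [app].
    rewrite <- Hxy, bs_eq_cancel_linv, app_nil_r. reflexivity.
Qed.

Lemma lpow_pred k : bs_eq m n (lpow x y k ++ [y]) (lpow x y (k - 1)).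
Proof.
  rewrite <- (Z.sub_add 1 k) at 1. rewrite <- lpow_succ, <- app_assoc; cbn [app].
  rewrite <- Hxy, bs_eq_cancel, app_nil_r. reflexivity.
Qed.

Lemma lpow_add i j : bs_eq m n (lpow x y i ++ lpow x y j) (lpow x y (i + j)).
Proof.
  revert i; induction j as [|j IH|j IH] using Z.peano_ind; intros i.
  - rewrite app_nil_r, Z.add_0_r. reflexivity.
  - rewrite <- Z.add_1_r, <- lpow_succ, app_assoc, IH, lpow_succ, Z.add_assoc. reflexivity.
  - rewrite <- Z.sub_1_r, <- lpow_pred, app_assoc, IH, lpow_pred, Z.add_sub_assoc.
    reflexivity.
Qed.

End LetterPowers.

Lemma apow_0 : apow 0 = [].
Proof. reflexivity. Qed.

Section Powers.
Variables m n : Z.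

Lemma apow_add i j : bs_eq m n (apow i ++ apow j) (apow (i + j)).
Proof. exact (lpow_add m n LA LAi eq_refl i j). Qed.

Lemma tpow_add i j : bs_eq m n (tpow i ++ tpow j) (tpow (i + j)).
Proof. exact (lpow_add m n LT LTi eq_refl i j). Qed.

Lemma tpow_opp_r k : bs_eq m n (tpow k ++ tpow (- k)) [].
Proof. rewrite tpow_add, Z.add_opp_diag_r. reflexivity. Qed.

Lemma tpow_opp_l k : bs_eq m n (tpow (- k) ++ tpow k) [].
Proof. rewrite tpow_add, Z.add_opp_diag_l. reflexivity. Qed.

Lemma apow_opp_l k : bs_eq m n (apow (- k) ++ apow k) [].
Proof. rewrite apow_add, Z.add_opp_diag_l. reflexivity. Qed.

Lemma apow_opp_r k : bs_eq m n (apow k ++ apow (- k)) [].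
Proof. rewrite apow_add, Z.add_opp_diag_r. reflexivity. Qed.

Lemma tpow_commute_conj_l u v k :
  bs_eq m n (u ++ tpow k) (tpow k ++ v) <-> bs_eq m n (tpow k ++ v ++ tpow (- k)) u.
Proof.
  split; intros H.
  - rewrite app_assoc, <- H, <- app_assoc, tpow_opp_r, app_nil_r. reflexivity.
  - rewrite <- H, <- !app_assoc, tpow_opp_l, app_nil_r. reflexivity.
Qed.

Lemma tpow_commute_conj_r u v k :
  bs_eq m n (u ++ tpow k) (tpow k ++ v) <-> bs_eq m n (tpow (- k) ++ u ++ tpow k) v.
Proof.
  split; intros H.
  - rewrite H, app_assoc, tpow_opp_l. reflexivity.
  - rewrite <- H, !app_assoc, tpow_opp_r. reflexivity.
Qed.

Lemma t_apow_m : bs_eq m n ([LT] ++ apow m) (apow n ++ [LT]).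
Proof.
  assert (Hrel : bs_eq m n (relator m n) []).
  { pose proof (rst_step _ _ _ _ (step_rel m n [] [])) as H.
    rewrite app_nil_l, app_nil_r in H. exact H. }
  transitivity (relator m n ++ apow n ++ [LT]); [|rewrite Hrel; reflexivity].
  unfold relator. rewrite <- !app_assoc, (app_assoc (apow (- n))), apow_opp_l; cbn [app].
  rewrite (bs_eq_cancel m n LTi), app_nil_r. reflexivity.
Qed.

Lemma apow_conj_mul w i j :
  bs_eq m n (w ++ apow i) (apow j ++ w) ->
  forall s, bs_eq m n (w ++ apow (i * s)) (apow (j * s) ++ w).
Proof.
  intros H.
  assert (Hopp : bs_eq m n (w ++ apow (- i)) (apow (- j) ++ w)).
  { transitivity (apow (- j) ++ (w ++ apow i) ++ apow (- i)).
    - rewrite H, <- app_assoc, !app_assoc, apow_opp_l. reflexivity.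
    - rewrite <- !app_assoc, apow_opp_r, app_nil_r. reflexivity. }
  induction s as [|s IH|s IH] using Z.peano_ind.
  - rewrite !Z.mul_0_r, app_nil_r. reflexivity.
  - rewrite !Z.mul_succ_r, <- !apow_add, app_assoc, IH, <- app_assoc, H, app_assoc.
    reflexivity.
  - rewrite !Z.mul_pred_r, <- !Z.add_opp_r, <- !apow_add, app_assoc, IH, <- app_assoc,
      Hopp, app_assoc.
    reflexivity.
Qed.

End Powers.

Lemma tpow_of_nat k : tpow (Z.of_nat k) = repeat LT k.
Proof. unfold tpow. destruct (Z.leb_spec 0 (Z.of_nat k)); [now rewrite Nat2Z.id | lia]. Qed.

Lemma tpow_opp_of_nat k : tpow (- Z.of_nat k) = repeat LTi k.
Proof.
  unfold tpow. destruct k as [|k]; [reflexivity|].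
  destruct (Z.leb_spec 0 (- Z.of_nat (S k))); [lia|]. now rewrite Z.opp_involutive, Nat2Z.id.
Qed.

Lemma tpow_succ_r m n k :
  bs_eq m n (tpow (Z.of_nat (S k))) (tpow (Z.of_nat k) ++ [LT]).
Proof. rewrite Nat2Z.inj_succ, <- Z.add_1_r, <- tpow_add. reflexivity. Qed.

Lemma tpow_opp_succ m n k :
  bs_eq m n (tpow (- Z.of_nat (S k))) ([LTi] ++ tpow (- Z.of_nat k)).
Proof.
  rewrite Nat2Z.inj_succ, <- Z.add_1_r, Z.opp_add_distr, Z.add_comm, <- tpow_add.
  reflexivity.
Qed.

Lemma t_conj_apow_mul m n s : bs_eq m n ([LT] ++ apow (m * s) ++ [LTi]) (apow (n * s)).
Proof.
  rewrite app_assoc, (apow_conj_mul m n _ _ _ (t_apow_m m n) s), <- app_assoc; cbn [app].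
  rewrite bs_eq_cancel, app_nil_r. reflexivity.
Qed.

Fixpoint rescales (m n : Z) (k : nat) (e f : Z) : Prop :=
  match k with
  | O => e = f
  | S k => exists s, e = m * s /\ rescales m n k (n * s) f
  end.

Lemma tpow_conj_of_rescales m n k e f :
  rescales m n k e f ->
  bs_eq m n (tpow (Z.of_nat k) ++ apow e ++ tpow (- Z.of_nat k)) (apow f).
Proof.
  revert e; induction k as [|k IH]; intros e.
  - intros ->. rewrite app_nil_r. reflexivity.
  - intros (s & -> & Hs). specialize (IH _ Hs).
    rewrite <- (t_conj_apow_mul m n s) in IH.
    rewrite tpow_succ_r, tpow_opp_succ, <- IH, <- !app_assoc. reflexivity.
Qed.

Fixpoint texp (w : word) : Z :=
  match w with
  | [] => 0
  | LT :: w => 1 + texp w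
  | LTi :: w => -1 + texp w
  | _ :: w => texp w
  end.

Lemma texp_app u v : texp (u ++ v) = texp u + texp v.
Proof. induction u as [|[] u IH]; cbn [texp app]; lia. Qed.

Lemma texp_repeat x k : texp (repeat x k) = Z.of_nat k * texp [x].
Proof. induction k as [|k IH]; [reflexivity|]. destruct x; cbn [repeat texp] in *; lia. Qed.

Lemma texp_apow k : texp (apow k) = 0.
Proof. unfold apow. destruct (0 <=? k); rewrite texp_repeat; cbn; lia. Qed.

Lemma texp_tpow k : texp (tpow k) = k.
Proof. unfold tpow. destruct (Z.leb_spec 0 k); rewrite texp_repeat; cbn; lia. Qed.

Lemma texp_bs_eq m n u v : bs_eq m n u v -> texp u = texp v.
Proof.
  induction 1 as [u v [u' v' x | u' v'] | | |]; try congruence.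
  - rewrite !texp_app. destruct x; cbn; lia.
  - unfold relator. rewrite !texp_app, !texp_apow. cbn. lia.
Qed.

Lemma texp_same_aline m n x y : same_aline m n x y -> texp x = texp y.
Proof. intros [k Hk]. apply texp_bs_eq in Hk. rewrite texp_app, texp_apow in Hk. lia. Qed.

Lemma texp_same_tline m n x y k : bs_eq m n (x ++ tpow k) y -> texp y = texp x + k.
Proof. intros Hk. apply texp_bs_eq in Hk. rewrite texp_app, texp_tpow in Hk. lia. Qed.

Section NormalForms.
Variables m n : Z.
Hypotheses (Hm : m <> 0) (Hn : n <> 0).

(* A state ([(r_k, e_k); ...; (r_1, e_1)], c) encodes the Britton normal form
   a^r_1 t^(±1) ... a^r_k t^(±1) a^c, where e_i = true stands for t and r_i is
   reduced mod n before t and mod m before t^-1. *)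
Definition nform := (list (Z * bool) * Z)%type.

Definition modulus (e : bool) : Z := if e then n else m.

(* a^c t = a^(c mod n) t a^(m (c / n)) because a^n t = t a^m; symmetrically for t^-1. *)
Definition tstep (e : bool) (s : nform) : nform :=
  let (L, c) := s in
  let r := c mod modulus e in
  let c' := modulus (negb e) * (c / modulus e) in
  match L with
  | (r', e') :: L' =>
      if Bool.eqb e' (negb e) && (r =? 0) then (L', r' + c') else ((r, e) :: L, c')
  | [] => ([(r, e)], c')
  end.

Definition act_letter (l : letter) (s : nform) : nform :=
  match l with
  | LA => (fst s, snd s + 1)
  | LAi => (fst s, snd s - 1)
  | LT => tstep true s
  | LTi => tstep false s
  end.

Definition act (w : word) (s : nform) : nform := fold_left (fun s l => act_letter l s) w s.

Fixpoint reduced (L : list (Z * bool)) : Prop :=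
  match L with
  | [] => True
  | (r, e) :: L' =>
      r mod modulus e = r /\
      match L' with [] => True | (_, e') :: _ => ~ (e' = negb e /\ r = 0) end /\
      reduced L'
  end.

Lemma modulus_neq0 e : modulus e <> 0.
Proof. destruct e; assumption. Qed.

Lemma act_app u v s : act (u ++ v) s = act v (act u s).
Proof. apply fold_left_app. Qed.

Lemma act_apow k L c : act (apow k) (L, c) = (L, c + k).
Proof.
  assert (HA : forall j c, act (repeat LA j) (L, c) = (L, c + Z.of_nat j)).
  { induction j as [|j IH]; intros c'; cbn; [f_equal; lia|]. rewrite IH. f_equal; lia. }
  assert (HAi : forall j c, act (repeat LAi j) (L, c) = (L, c - Z.of_nat j)).
  { induction j as [|j IH]; intros c'; cbn; [f_equal; lia|]. rewrite IH. f_equal; lia. }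
  unfold apow. destruct (Z.leb_spec 0 k); [rewrite HA | rewrite HAi]; f_equal; lia.
Qed.

Lemma tstep_reduced e s : reduced (fst s) -> reduced (fst (tstep e s)).
Proof.
  destruct s as [[|[r' e'] L'] c]; cbn [fst tstep].
  - intros _. repeat split. apply Z.mod_mod, modulus_neq0.
  - intros (Hr' & Hpinch & HL').
    destruct (Bool.eqb e' (negb e) && (c mod modulus e =? 0)) eqn:E; [exact HL'|].
    split; [apply Z.mod_mod, modulus_neq0|]. split; [|exact (conj Hr' (conj Hpinch HL'))].
    intros [-> Hr]. rewrite Hr, eqb_reflx in E. discriminate.
Qed.

Lemma act_reduced w s : reduced (fst s) -> reduced (fst (act w s)).
Proof.
  revert s; induction w as [|l w IH]; intros s Hs; [exact Hs|].
  apply IH. destruct l; try apply tstep_reduced; exact Hs.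
Qed.

Lemma tstep_push_pop e L c :
  tstep (negb e) ((c mod modulus e, e) :: L, modulus (negb e) * (c / modulus e)) = (L, c).
Proof.
  cbn [tstep]. rewrite negb_involutive, eqb_reflx, Z.mul_comm, Z.mod_mul, Z.div_mul
    by apply modulus_neq0.
  cbn. f_equal. pose proof (Z.div_mod c _ (modulus_neq0 e)). lia.
Qed.

Lemma tstep_inv e s : reduced (fst s) -> tstep (negb e) (tstep e s) = s.
Proof.
  destruct s as [[|[r' e'] L'] c]; cbn [fst]; [intros _; apply tstep_push_pop|].
  intros (Hr' & Hpinch & _). cbn [tstep].
  destruct (Bool.eqb e' (negb e) && (c mod modulus e =? 0)) eqn:E; [|apply tstep_push_pop].
  apply andb_true_iff in E as [E1 E2]. apply eqb_prop in E1. apply Z.eqb_eq in E2. subst e'.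
  assert (Hr'0 : r' / modulus (negb e) = 0) by (rewrite <- Hr'; apply Zmod_div).
  assert (Hc : c = modulus e * (c / modulus e)).
  { pose proof (Z.div_mod c _ (modulus_neq0 e)). lia. }
  cbn [tstep]. rewrite Z.mul_comm, Z.mod_add, Z.div_add, Hr', Hr'0 by apply modulus_neq0.
  rewrite negb_involutive, Z.add_0_l, <- Hc.
  destruct L' as [|[r'' e''] L'']; [reflexivity|].
  destruct (Bool.eqb e'' e && (r' =? 0)) eqn:E; [|reflexivity].
  apply andb_true_iff in E as [E3 E4]. apply eqb_prop in E3. apply Z.eqb_eq in E4.
  rewrite negb_involutive in Hpinch. tauto.
Qed.

Lemma act_t_apow_m s : act ([LT] ++ apow m) s = act (apow n ++ [LT]) s.
Proof.
  destruct s as [L c]. rewrite !act_app, act_apow.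
  cbn [act fold_left act_letter tstep modulus negb].
  replace (c + n) with (c + 1 * n) by ring. rewrite Z.mod_add, Z.div_add by exact Hn.
  destruct L as [|[r' e'] L']; [|destruct (_ && _)]; rewrite act_apow; f_equal; ring.
Qed.

Lemma act_relator s : reduced (fst s) -> act (relator m n) s = s.
Proof.
  destruct s as [L c]; intros HL. unfold relator.
  rewrite app_assoc, act_app, act_t_apow_m, !act_app, act_apow.
  change (act [LTi] (act [LT] (L, c + n))) with (tstep (negb true) (tstep true (L, c + n))).
  rewrite tstep_inv by exact HL. rewrite act_apow. f_equal. ring.
Qed.

Lemma act_bs_eq u v : bs_eq m n u v -> forall s, reduced (fst s) -> act u s = act v s.
Proof.
  induction 1 as [u v [u' v' x | u' v'] | | u v _ IH | u v w _ IHuv _ IHvw];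
    intros s Hs; rewrite ?act_app.
  - f_equal. pose proof (act_reduced u' s Hs) as Hu'. destruct (act u' s) as [L c].
    destruct x; cbn [act fold_left act_letter linv fst snd].
    + f_equal; ring.
    + f_equal; ring.
    + exact (tstep_inv true _ Hu').
    + exact (tstep_inv false _ Hu').
  - f_equal. apply act_relator, act_reduced, Hs.
  - reflexivity.
  - symmetry. apply IH, Hs.
  - rewrite IHuv by exact Hs. apply IHvw, Hs.
Qed.

Lemma act_repeat_t k : act (repeat LT k) ([], 0) = (repeat (0, true) k, 0).
Proof.
  induction k as [|k IH]; [reflexivity|].
  change (repeat LT (S k)) with (LT :: repeat LT k).
  rewrite repeat_cons, act_app, IH. cbn [act fold_left act_letter tstep].
  rewrite Zmod_0_l, Zdiv_0_l, Z.mul_0_r. destruct k; reflexivity.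
Qed.

Lemma act_repeat_tinv_nonempty k r L c : fst (act (repeat LTi k) ((r, false) :: L, c)) <> [].
Proof.
  revert r L c; induction k as [|k IH]; intros r L c; [discriminate|]. apply IH.
Qed.

Lemma rescales_of_act_repeat_t_inv k e f :
  act (repeat LTi k) (repeat (0, true) k, e) = ([], f) -> rescales m n k e f.
Proof.
  revert e; induction k as [|k IH]; intros e H; [injection H; auto|].
  cbn [repeat act fold_left act_letter tstep modulus negb] in H.
  destruct (Z.eqb_spec (e mod m) 0) as [Hdiv|Hndiv]; cbn [andb eqb] in H.
  - exists (e / m). split; [apply Z.div_exact; assumption|]. apply IH, H.
  - exfalso. apply (act_repeat_tinv_nonempty k (e mod m) ((0, true) :: repeat (0, true) k)
      (n * (e / m))). unfold act. rewrite H. reflexivity.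
Qed.

Lemma rescales_of_tpow_conj k e f :
  bs_eq m n (tpow (Z.of_nat k) ++ apow e ++ tpow (- Z.of_nat k)) (apow f) ->
  rescales m n k e f.
Proof.
  intros H. pose proof (act_bs_eq _ _ H ([], 0) I) as Hact.
  rewrite !act_app, tpow_of_nat, tpow_opp_of_nat, act_repeat_t, !act_apow in Hact.
  apply rescales_of_act_repeat_t_inv. exact Hact.
Qed.

End NormalForms.

Lemma gcd_cofactors m n : m <> 0 ->
  exists m' n', 0 < Z.gcd m n /\ m = m' * Z.gcd m n /\ n = n' * Z.gcd m n /\ Z.gcd m' n' = 1.
Proof.
  intros Hm. destruct (Z.gcd_divide_l m n) as [m' Em], (Z.gcd_divide_r m n) as [n' En].
  assert (Hh : 0 < Z.gcd m n).
  { pose proof (Z.gcd_nonneg m n). pose proof (Z.gcd_eq_0_l m n). lia. }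
  exists m', n'. repeat split; try assumption.
  rewrite <- (Z.div_mul m' (Z.gcd m n)), <- (Z.div_mul n' (Z.gcd m n)), <- Em, <- En by lia.
  apply Z.gcd_div_gcd; lia.
Qed.

Lemma abs_cofactor_pow a a' h d : 0 < h -> a = a' * h ->
  h * (Z.abs a / h) ^ d = Z.abs (h * a' ^ d).
Proof.
  intros Hh ->. rewrite !Z.abs_mul, Z.abs_pow, (Z.abs_eq h), Z.div_mul by lia. reflexivity.
Qed.

Lemma gcd_pow_l a b k : Z.gcd a b = 1 -> Z.gcd (a ^ Z.of_nat k) b = 1.
Proof.
  intros H. apply Zgcd_1_rel_prime in H. apply Zgcd_1_rel_prime.
  induction k as [|k IH]; [apply rel_prime_1|].
  rewrite Nat2Z.inj_succ, Z.pow_succ_r by lia.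
  apply rel_prime_sym, rel_prime_mult; apply rel_prime_sym; assumption.
Qed.

Lemma rescales_iff m' n' h k e f : h <> 0 -> m' <> 0 -> Z.gcd m' n' = 1 -> (0 < k)%nat ->
  rescales (m' * h) (n' * h) k e f <->
  exists v, e = h * m' ^ Z.of_nat k * v /\ f = h * n' ^ Z.of_nat k * v.
Proof.
  intros Hh Hm' Hcop Hk. destruct k as [|k]; [lia|]. clear Hk.
  revert e; induction k as [|k IH]; intros e.
  - cbn [rescales]. split.
    + intros (s & -> & <-). exists s. cbn. lia.
    + intros (v & -> & ->). exists v. cbn. lia.
  - assert (HP : m' ^ Z.of_nat (S (S k)) = m' * m' ^ Z.of_nat (S k))
      by (rewrite (Nat2Z.inj_succ (S k)), Z.pow_succ_r; lia).
    assert (HQ : n' ^ Z.of_nat (S (S k)) = n' * n' ^ Z.of_nat (S k))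
      by (rewrite (Nat2Z.inj_succ (S k)), Z.pow_succ_r; lia).
    rewrite HP, HQ. cbn [rescales]. split.
    + intros (s & -> & Hs). apply IH in Hs as (v & Hv & ->).
      assert (Hsv : n' * s = m' ^ Z.of_nat (S k) * v) by (apply (Z.mul_reg_l _ _ h Hh); lia).
      assert (Hs : (m' ^ Z.of_nat (S k) | s)).
      { apply (Z.gauss _ n'); [rewrite Hsv; apply Z.divide_factor_l|].
        apply gcd_pow_l, Hcop. }
      destruct Hs as [w ->].
      assert (HP0 : m' ^ Z.of_nat (S k) <> 0) by (apply Z.pow_nonzero; lia).
      assert (Hv' : v = n' * w) by (apply (Z.mul_reg_l _ _ _ HP0); lia).
      exists w. split; [ring|]. rewrite Hv'. ring.
    + intros (v & -> & ->). exists (m' ^ Z.of_nat (S k) * v). split; [ring|].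
      apply IH. exists (n' * v). split; ring.
Qed.

Lemma same_aline_refl m n x : same_aline m n x x.
Proof. exists 0. rewrite apow_0, app_nil_r. reflexivity. Qed.

Lemma same_aline_sym m n x y : same_aline m n x y -> same_aline m n y x.
Proof.
  intros [k Hk]. exists (- k).
  rewrite <- Hk, <- app_assoc, apow_opp_r, app_nil_r. reflexivity.
Qed.

Lemma same_aline_trans m n x y z :
  same_aline m n x y -> same_aline m n y z -> same_aline m n x z.
Proof. intros [k Hk] [j Hj]. exists (k + j). rewrite <- apow_add, app_assoc, Hk. exact Hj. Qed.

Lemma Tadj_same_aline_l m n x x' y : same_aline m n x x' -> Tadj m n x' y -> Tadj m n x y.
Proof.
  intros Hx [[g [Hg Hgt]] | [g [Hg Hgt]]]; [left | right];
    exists g; eauto using same_aline_trans.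
Qed.

Lemma walk_Tadj_snoc m n x y z k :
  walk m n (Tadj m n) x y k -> Tadj m n y z -> walk m n (Tadj m n) x z (S k).
Proof.
  induction 1 as [x y Hxy | x y w k Hxy _ IH]; intros Hyz.
  - apply walkS with z; [eapply Tadj_same_aline_l; eassumption | apply walk0, same_aline_refl].
  - apply walkS with y; auto.
Qed.

Lemma walk_Tadj_rev m n x y k : walk m n (Tadj m n) x y k -> walk m n (Tadj m n) y x k.
Proof.
  induction 1 as [x y Hxy | x y w k [Hxy | Hyx] _ IH].
  - apply walk0, same_aline_sym, Hxy.
  - apply walk_Tadj_snoc with y; [exact IH | right; exact Hxy].
  - apply walk_Tadj_snoc with y; [exact IH | left; exact Hyx].
Qed.

Lemma is_dT_sym m n x y d : is_dT m n x y d -> is_dT m n y x d.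
Proof.
  intros [Hw Hmin]. split; [apply walk_Tadj_rev, Hw|].
  intros k Hk. apply Hmin, walk_Tadj_rev, Hk.
Qed.

Lemma walk_Tedge_texp m n x y k :
  walk m n (Tedge m n) x y k -> texp y = texp x + Z.of_nat k.
Proof.
  induction 1 as [x y Hxy | x y z k [g [Hg Hgt]] _ IH].
  - apply texp_same_aline in Hxy. lia.
  - apply texp_same_aline in Hg. apply texp_same_aline in Hgt.
    rewrite texp_app in Hgt. cbn in Hgt. lia.
Qed.

Lemma Tlt_dist m n x y d : is_dT m n x y d -> Tlt m n x y ->
  (0 < d)%nat /\ texp y = texp x + Z.of_nat d.
Proof.
  intros [Hw Hmin] [[d' [[Hw' Hmin'] He]] Hne].
  assert (d' = d) as -> by (apply Nat.le_antisymm; auto).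
  split; [|eapply walk_Tedge_texp, He].
  destruct d; [|lia]. inversion He. contradiction.
Qed.

Lemma equally_spaced_abs m n (S : word -> Prop) x0 g :
  (forall x, S x <-> exists v, bs_eq m n (x0 ++ apow (g * v)) x) ->
  equally_spaced m n S (Z.abs g).
Proof.
  intros HS. exists x0. split.
  - apply HS. exists 0. rewrite Z.mul_0_r, apow_0, app_nil_r. reflexivity.
  - intros x. rewrite HS.
    destruct (Z.abs_eq_or_opp g) as [-> | ->]; [reflexivity|].
    split; intros [v Hv]; exists (- v);
      [replace (- g * - v) with (g * v) | replace (g * - v) with (- g * v)]; auto; ring.
Qed.

Section Ell12.
Variables (m n : Z) (g1 g2 x0 y0 : word) (k : Z).
Hypotheses (Hx0 : same_aline m n g2 x0) (Hy0 : same_aline m n g1 y0)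
  (Hk : bs_eq m n (x0 ++ tpow k) y0).

Lemma ell12_texp : texp g1 = texp g2 + k.
Proof.
  apply texp_same_aline in Hx0. apply texp_same_aline in Hy0.
  apply texp_same_tline in Hk. lia.
Qed.

Lemma ell12_iff x : ell12 m n g1 g2 x <->
  exists r c, bs_eq m n (x0 ++ apow r) x /\
              bs_eq m n (apow r ++ tpow k) (tpow k ++ apow c).
Proof.
  split.
  - intros [Hx [y [Hy [k' Hk']]]].
    destruct (same_aline_trans _ _ _ _ _ (same_aline_sym _ _ _ _ Hx0) Hx) as [r Hr].
    destruct (same_aline_trans _ _ _ _ _ (same_aline_sym _ _ _ _ Hy0) Hy) as [c Hc].
    assert (k' = k) as ->.
    { apply texp_same_tline in Hk'. apply texp_same_aline in Hx. apply texp_same_aline in Hy.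
      pose proof ell12_texp. lia. }
    exists r, c. split; [exact Hr|]. apply (bs_eq_app_cancel_l m n x0).
    rewrite app_assoc, Hr, Hk', <- Hc, app_assoc, Hk. reflexivity.
  - intros (r & c & Hr & Hrc). split.
    + apply same_aline_trans with x0; [exact Hx0 | exists r; exact Hr].
    + exists (y0 ++ apow c). split.
      * apply same_aline_trans with y0; [exact Hy0 | exists c; reflexivity].
      * exists k. rewrite <- Hr, <- app_assoc, Hrc, app_assoc, Hk. reflexivity.
Qed.

Variables m' n' h : Z.
Hypotheses (Hm : m <> 0) (Hn : n <> 0) (Em : m = m' * h) (En : n = n' * h)
  (Hcop : Z.gcd m' n' = 1).

Lemma tpow_conj_apow_iff d e f : (0 < d)%nat ->
  bs_eq m n (tpow (Z.of_nat d) ++ apow e ++ tpow (- Z.of_nat d)) (apow f) <->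
  exists v, e = h * m' ^ Z.of_nat d * v /\ f = h * n' ^ Z.of_nat d * v.
Proof.
  intros Hd. rewrite <- rescales_iff, <- Em, <- En by (try assumption; intros ->; lia).
  split; [apply rescales_of_tpow_conj; assumption | apply tpow_conj_of_rescales].
Qed.

Lemma ell12_spaced_pos d : (0 < d)%nat -> k = Z.of_nat d ->
  forall x, ell12 m n g1 g2 x <-> exists v, bs_eq m n (x0 ++ apow (h * n' ^ Z.of_nat d * v)) x.
Proof.
  intros Hd Ek x. rewrite ell12_iff, Ek. split.
  - intros (r & c & Hr & Hrc).
    apply tpow_commute_conj_l, tpow_conj_apow_iff in Hrc as (v & _ & ->); [|exact Hd].
    exists v. exact Hr.
  - intros (v & Hv). exists (h * n' ^ Z.of_nat d * v), (h * m' ^ Z.of_nat d * v).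
    split; [exact Hv|]. apply tpow_commute_conj_l, tpow_conj_apow_iff; [exact Hd|].
    exists v. split; reflexivity.
Qed.

Lemma ell12_spaced_neg d : (0 < d)%nat -> k = - Z.of_nat d ->
  forall x, ell12 m n g1 g2 x <-> exists v, bs_eq m n (x0 ++ apow (h * m' ^ Z.of_nat d * v)) x.
Proof.
  intros Hd Ek x. rewrite ell12_iff, Ek. split.
  - intros (r & c & Hr & Hrc).
    apply tpow_commute_conj_r in Hrc. rewrite Z.opp_involutive in Hrc.
    apply tpow_conj_apow_iff in Hrc as (v & -> & _); [|exact Hd].
    exists v. exact Hr.
  - intros (v & Hv). exists (h * m' ^ Z.of_nat d * v), (h * n' ^ Z.of_nat d * v).
    split; [exact Hv|]. apply tpow_commute_conj_r. rewrite Z.opp_involutive.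
    apply tpow_conj_apow_iff; [exact Hd|]. exists v. split; reflexivity.
Qed.

End Ell12.

Theorem lemma3p6 (m n : Z) (g1 g2 : word) :
  m <> 0 -> n <> 0 -> Z.abs m < Z.abs n ->
  (exists x, ell12 m n g1 g2 x) ->
  forall d : nat, is_dT m n g1 g2 d ->
    let h := Z.gcd m n in
    let p := Z.abs m / h in
    let q := Z.abs n / h in
    (Tlt m n g2 g1 -> equally_spaced m n (ell12 m n g1 g2) (h * q ^ Z.of_nat d)) /\
    (Tlt m n g1 g2 -> equally_spaced m n (ell12 m n g1 g2) (h * p ^ Z.of_nat d)).
Proof.
  intros Hm Hn _ [x0 [Hx0 [y0 [Hy0 [k Hk]]]]] d Hd; cbv zeta.
  destruct (gcd_cofactors m n Hm) as (m' & n' & Hh & Em & En & Hcop).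
  pose proof (ell12_texp m n g1 g2 x0 y0 k Hx0 Hy0 Hk) as Htexp.
  split; intros Hlt.
  - destruct (Tlt_dist m n g2 g1 d (is_dT_sym m n g1 g2 d Hd) Hlt) as [Hd0 Hd_texp].
    rewrite (abs_cofactor_pow n n' _ _ Hh En).
    apply equally_spaced_abs with x0.
    apply (ell12_spaced_pos m n g1 g2 x0 y0 k Hx0 Hy0 Hk m' n' _ Hm Hn Em En Hcop d Hd0).
    lia.
  - destruct (Tlt_dist m n g1 g2 d Hd Hlt) as [Hd0 Hd_texp].
    rewrite (abs_cofactor_pow m m' _ _ Hh Em).
    apply equally_spaced_abs with x0.
    apply (ell12_spaced_neg m n g1 g2 x0 y0 k Hx0 Hy0 Hk m' n' _ Hm Hn Em En Hcop d Hd0).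
    lia.
Qed.
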